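(* Let $Q_t(x)=1+t(e^x-1)$. For every integer $k\geq1$, the coefficient of $x^{k-1}$ in the formal power series $Q_t'(x)/Q_t(x)$ (equivalently $\frac{1}{2\pi\sqrt{-1}}\oint\frac{Q_t'(x)}{x^kQ_t(x)}dx$) equals $$t\sum_{i=0}^{k-1}\frac{S(k,k-i)}{\binom{k-1}{i}\cdot i!}(-t)^{k-1-i}.$$
   Context: $S(n,m)$ is the Stirling number of the second kind (number of partitions of $\{1,\ldots,n\}$ into exactly $m$ nonempty blocks), with $S(n,m)=0$ for $m>n$, $S(n,0)=0$ for $n>0$, $S(0,0)=1$. *)

From HB Require Import structures.
From mathcomp Require Import all_boot all_order all_algebra.
Set Implicit Arguments. Unset Strict Implicit. Unset Printing Implicit Defensive.
Import Order.TTheory GRing.Theory Num.Theory.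
Local Open Scope ring_scope.

(* Stirling numbers of the second kind, combinatorially: the number of
   partitions of {0,..,n-1} into exactly m nonempty blocks.
   (mathcomp's [partition P D] requires set0 \notin P.) *)
Definition stirling2 (n m : nat) : nat :=
  #|[set P : {set {set 'I_n}} | partition P [set: 'I_n] && (#|P| == m)]|.

Definition fps (R : nzRingType) := nat -> R.

Definition fps_one (R : nzRingType) : fps R := fun n => (n == 0%N)%:R.
Definition fps_add (R : nzRingType) (f g : fps R) : fps R := fun n => f n + g n.
Definition fps_opp (R : nzRingType) (f : fps R) : fps R := fun n => - f n.
Definition fps_scale (R : nzRingType) (c : R) (f : fps R) : fps R :=
  fun n => c * f n.
Definition fps_mul (R : nzRingType) (f g : fps R) : fps R :=
  fun n => \sum_(j < n.+1) f j * g (n - j)%N.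
Definition fps_deriv (R : nzRingType) (f : fps R) : fps R :=
  fun n => n.+1%:R * f n.+1.
Definition fps_exp (R : unitRingType) : fps R := fun n => (n`!%:R)^-1.

Definition Qt (R : unitRingType) (t : R) : fps R :=
  fps_add (fps_one R) (fps_scale t (fps_add (fps_exp R) (fps_opp (fps_one R)))).

(* h is the formal quotient f / g, i.e. g * h = f coefficientwise.
   When g 0 is invertible (as for Q_t, whose constant term is 1) such h
   exists and is unique. *)
Definition fps_quotient (R : nzRingType) (f g h : fps R) : Prop :=
  forall n, fps_mul g h n = f n.

From HB Require Import structures.
From mathcomp Require Import all_boot all_order all_algebra.
From mathcomp Require Import ring.
Set Implicit Arguments. Unset Strict Implicit. Unset Printing Implicit Defensive.
Import GRing.Theory Num.Theory.

(* Let a n = n`! * h n.  Comparing coefficients in Q_t * h = Q_t' gives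
   a n + t * \sum_(i < n) 'C(n, i) * a i = t, a recursion that determines a.
   The polynomials P_0 = X, P_(n+1) = (X - X^2) * P_n' satisfy the same
   identity with t replaced by X (differentiate it and use Pascal's rule), so
   a n = P_n(t).  The coefficients of X^(j+1) in P_(n+1) and P_n are related
   by c' = (j+1) c_(j+1) - j c_j, which after scaling by (-1)^j j! is the
   recursion S(n+1, m+1) = (m+1) S(n, m+1) + S(n, m) obtained by removing the
   last point from a set partition.  Hence that coefficient of P_n is
   (-1)^j j! S(n+1, j+1), and reindexing gives the sum. *)

Lemma setD1_notin (T : finType) (A : {set T}) a : a \notin A -> A :\ a = A.
Proof. by move=> aA; apply/setDidPl; rewrite disjoint_sym disjoints1. Qed.

Lemma card_pointed_sets (T : finType) (S : {set {set T}}) k :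
    {in S, forall Q : {set T}, #|Q| = k} ->
  #|[set QB : {set T} * T | (QB.1 \in S) && (QB.2 \in QB.1)]| = k * #|S|.
Proof.
move=> cardS; rewrite -sum1_card.
rewrite (eq_bigl (fun QB => (QB.1 \in S) && (QB.2 \in QB.1))) => [|QB]; last by rewrite inE.
rewrite -(pair_big_dep (mem S) (fun Q B => B \in Q) (fun _ _ => 1%N)) /=.
by rewrite mulnC -sum_nat_const; apply: eq_bigr => Q /cardS <-; rewrite sum1_card.
Qed.

Definition set_partitions n m :=
  [set P : {set {set 'I_n}} | partition P [set: 'I_n] && (#|P| == m)].

Section LastPoint.
Variable n : nat.
Local Notation x0 := (@ord_max n).

Definition lift_set (B : {set 'I_n}) : {set 'I_n.+1} := lift x0 @: B.
Definition unlift_set (A : {set 'I_n.+1}) : {set 'I_n} := lift x0 @^-1: A.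

Lemma mem_lift_set B i : (lift x0 i \in lift_set B) = (i \in B).
Proof. exact/mem_imset/lift_inj. Qed.

Lemma last_notin_lift_set B : x0 \notin lift_set B.
Proof. by apply/imsetP => -[i _ /eqP]; rewrite (negbTE (neq_lift _ _)). Qed.

Lemma lift_setK : cancel lift_set unlift_set.
Proof. by move=> B; apply/setP => i; rewrite inE mem_lift_set. Qed.

Lemma unlift_setK A : lift_set (unlift_set A) = A :\ x0.
Proof.
apply/setP => y; rewrite in_setD1; case: (unliftP x0 y) => [i ->|->].
  by rewrite mem_lift_set inE eq_sym (negbTE (neq_lift _ _)).
by rewrite eqxx (negbTE (last_notin_lift_set _)).
Qed.

Lemma unlift_set_eq0 A : A != set0 -> unlift_set A = set0 -> x0 \in A.
Proof.
case/set0Pn => y yA /setP A0; case: (unliftP x0 y) yA => [i -> iA|-> //].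
by have := A0 i; rewrite !inE iA.
Qed.

Lemma unlift_setU1 A : unlift_set (x0 |: A) = unlift_set A.
Proof. by apply/setP => i; rewrite !inE eq_sym (negbTE (neq_lift _ _)). Qed.

Definition insert_last (QB : {set {set 'I_n}} * {set 'I_n}) : {set {set 'I_n.+1}} :=
  (x0 |: lift_set QB.2) |: lift_set @: (QB.1 :\ QB.2).

Definition remove_last (P : {set {set 'I_n.+1}}) :=
  (unlift_set @: P :\ set0, unlift_set (pblock P x0)).

(* B is a marked block of Q, or set0 when no block is marked; m counts the
   unmarked blocks.  The last point of 'I_n.+1 is inserted into B, or into a
   new singleton block when B = set0. *)
Definition marked_partitions m :=
  [set QB : {set {set 'I_n}} * {set 'I_n} | [&& partition QB.1 [set: 'I_n],
     (QB.2 == set0) || (QB.2 \in QB.1) & #|QB.1 :\ QB.2| == m]].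

Section RemoveLast.
Variable P : {set {set 'I_n.+1}}.
Hypothesis partP : partition P [set: 'I_n.+1].
Let tiP := partition_trivIset partP.
Local Notation Px0 := (pblock P x0).

Lemma pblock_last_mem : Px0 \in P.
Proof. by rewrite pblock_mem // (cover_partition partP). Qed.

Lemma last_notin_block A : A \in P -> A != Px0 -> x0 \notin A.
Proof. by move=> AP; apply: contraNN => xA; rewrite (def_pblock tiP AP xA). Qed.

Lemma unlift_set_inj_partition : {in P &, injective unlift_set}.
Proof.
move=> A A' AP A'P eqA; suff [y yA yA'] : exists2 y, y \in A & y \in A'.
  by rewrite -(def_pblock tiP AP yA) (def_pblock tiP A'P yA').
have [A0 | /set0Pn[i iA]] := eqVneq (unlift_set A) set0.
  by exists x0; apply: unlift_set_eq0; rewrite -?eqA ?(partition_neq0 partP).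
have iA' : i \in unlift_set A' by rewrite -eqA.
by move: iA iA'; rewrite !inE; exists (lift x0 i).
Qed.

Lemma unlift_partition : partition (unlift_set @: P :\ set0) [set: 'I_n].
Proof.
apply/and3P; split; last by rewrite setD11.
- apply/eqP/setP => i; rewrite inE; apply/bigcupP.
  have iP : lift x0 i \in pblock P (lift x0 i).
    by rewrite mem_pblock (cover_partition partP).
  exists (unlift_set (pblock P (lift x0 i))); last by rewrite inE.
  rewrite in_setD1 imset_f ?pblock_mem ?(cover_partition partP) // andbT.
  by apply/set0Pn; exists i; rewrite inE.
- apply: trivIsetD; apply/trivIsetP => _ _ /imsetP[A AP ->] /imsetP[A' A'P ->] neqA.
  have neqAA' : A != A' by apply: contraNneq neqA => ->.
  have /trivIsetP/(_ A A' AP A'P neqAA') := tiP.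
  by rewrite -!setI_eq0 -preimsetI => /eqP->; rewrite preimset0.
Qed.

Lemma unlift_other_blocks :
  (unlift_set @: P :\ set0) :\ unlift_set Px0 = unlift_set @: (P :\ Px0).
Proof.
apply/setP => C; rewrite !in_setD1; apply/idP/imsetP.
  case/and3P => neqC _ /imsetP[A AP defC]; exists A => //.
  by rewrite in_setD1 AP andbT; apply: contraNneq neqC => <-; rewrite defC.
case=> A /setD1P[neqA AP] ->; rewrite imset_f // andbT.
rewrite (inj_in_eq unlift_set_inj_partition) ?pblock_last_mem // neqA /=.
apply/eqP => A0; case/negP: (last_notin_block AP neqA).
exact: unlift_set_eq0 (partition_neq0 partP AP) A0.
Qed.

Lemma remove_last_marked m : #|P| = m.+1 -> remove_last P \in marked_partitions m.
Proof.
move=> cardP; rewrite inE /= unlift_partition unlift_other_blocks.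
rewrite card_in_imset; last by apply: sub_in2 unlift_set_inj_partition => A /setD1P[].
rewrite -eqSS -cardP (cardsD1 Px0 P) pblock_last_mem eqxx andbT /=.
by case: eqP => //= /eqP nz; rewrite in_setD1 nz imset_f ?pblock_last_mem.
Qed.

Lemma remove_lastK : insert_last (remove_last P) = P.
Proof.
rewrite /insert_last /= unlift_other_blocks unlift_setK.
rewrite setD1K ?mem_pblock ?(cover_partition partP) //.
rewrite -imset_comp (eq_in_imset (g := id)) ?imset_id ?setD1K ?pblock_last_mem //.
move=> A /setD1P[neqA AP] /=; rewrite unlift_setK setD1_notin //.
exact: last_notin_block.
Qed.

End RemoveLast.

Section InsertLast.
Variables (Q : {set {set 'I_n}}) (B : {set 'I_n}).
Hypotheses (partQ : partition Q [set: 'I_n]) (markB : (B == set0) || (B \in Q)).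

Lemma insert_last_partition : partition (insert_last (Q, B)) [set: 'I_n.+1].
Proof.
have partQB : partition (Q :\ B) (~: B).
  rewrite -setTD; case/orP: markB => [/eqP-> | BQ]; last exact: partitionD1.
  by rewrite setD0 setD1_notin ?(partition0 partQ).
have splitT : (x0 |: lift_set B) :|: lift_set (~: B) = [set: 'I_n.+1].
  apply/setP => y; rewrite !inE; case: (unliftP x0 y) => [i ->|->].
    by rewrite !mem_lift_set inE -orbA orbN orbT.
  by rewrite eqxx.
rewrite /insert_last /= -splitT partitionU1 ?imset_partition //; first exact: lift_inj.
  by apply/set0Pn; exists x0; rewrite setU11.
rewrite -setI_eq0; apply/eqP/setP => y; rewrite !inE.
case: (unliftP x0 y) => [i ->|->]; last by rewrite (negbTE (last_notin_lift_set (~: B))) andbF.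
by rewrite !mem_lift_set inE eq_sym (negbTE (neq_lift _ _)) andbN.
Qed.

Lemma card_insert_last : #|insert_last (Q, B)| = #|Q :\ B|.+1.
Proof.
rewrite cardsU1 card_imset; last exact: can_inj lift_setK.
by case: imsetP => // -[C _ /setP/(_ x0)]; rewrite setU11 (negbTE (last_notin_lift_set _)).
Qed.

Lemma insert_lastK : remove_last (insert_last (Q, B)) = (Q, B).
Proof.
have tiP := partition_trivIset insert_last_partition.
rewrite /remove_last (def_pblock tiP (setU11 _ _) (setU11 _ _)) unlift_setU1 lift_setK.
rewrite imsetU1 unlift_setU1 lift_setK -imset_comp (eq_imset _ lift_setK) imset_id.
congr pair; apply/setP => C; rewrite !inE.
have Q0 := partition0 partQ; case: eqVneq => [->|nzC] /=; first by rewrite Q0.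
have [eqCB | //] := eqVneq C B.
by move: markB; rewrite -eqCB (negbTE nzC).
Qed.

End InsertLast.

Lemma card_marked_partitions m :
  #|marked_partitions m| = #|set_partitions n m| + m.+1 * #|set_partitions n m.+1|.
Proof.
rewrite -(cardsID [set QB | QB.2 == set0]).
have -> : marked_partitions m :&: [set QB | QB.2 == set0] =
          setX (set_partitions n m) [set set0].
  apply/setP => -[Q B]; rewrite !inE /=; case: eqVneq => [-> | _]; rewrite ?andbF // !andbT.
  by case partQ: (partition Q _); rewrite //= setD1_notin ?(partition0 partQ).
rewrite cardsX cards1 muln1; congr addn; rewrite -card_pointed_sets.
  congr #|pred_of_set _|; apply/setP => -[Q B]; rewrite !inE /=.
  case: eqVneq => [-> | _] /=.
    by case partQ: (partition Q _); rewrite //= (partition0 partQ) andbF.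
  by rewrite (cardsD1 B Q); case: (B \in Q); rewrite /= ?andbT ?andbF.
by move=> Q; rewrite inE => /andP[_ /eqP].
Qed.

Lemma card_set_partitions_last m :
  #|set_partitions n.+1 m.+1| = #|marked_partitions m|.
Proof.
have partS P : P \in set_partitions n.+1 m.+1 -> partition P [set: 'I_n.+1].
  by rewrite inE => /andP[].
rewrite -(card_in_imset (can_in_inj (fun P PS => remove_lastK (partS P PS)))).
congr #|pred_of_set _|; apply/setP => QB; apply/imsetP/idP => [[P PS ->] | QBm].
  by move: PS; rewrite inE => /andP[partP /eqP]; apply: remove_last_marked.
move: (QBm); rewrite inE => /and3P[partQ markB /eqP cardQB].
case: QB partQ markB cardQB QBm => Q B /= partQ markB cardQB _.
exists (insert_last (Q, B)); last by rewrite insert_lastK.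
by rewrite inE insert_last_partition // card_insert_last cardQB /=.
Qed.

End LastPoint.

Lemma stirling2SS n m :
  stirling2 n.+1 m.+1 = m.+1 * stirling2 n m.+1 + stirling2 n m.
Proof. by rewrite [LHS]card_set_partitions_last card_marked_partitions addnC. Qed.

Lemma stirling2_0 m : stirling2 0 m = (m == 0).
Proof.
have partT0 (P : {set {set 'I_0}}) : partition P [set: 'I_0] = (P == set0).
  by rewrite -partition_set0; congr partition; apply/setP => -[].
case: m => [|m]; [apply: (eq_card1 (x := set0)) | apply: eq_card0] => P;
  by rewrite !inE partT0; case: eqP => // ->; rewrite cards0.
Qed.

Lemma stirling2S0 n : stirling2 n.+1 0 = 0.
Proof.
apply: eq_card0 => P; rewrite !inE cards_eq0; apply/andP => -[/cover_partition covP /eqP P0].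
by move/setP: covP => /(_ ord0); rewrite P0 /cover big_set0 !inE.
Qed.

Lemma stirling2_small n m : n < m -> stirling2 n m = 0.
Proof.
elim: n m => [|n IHn] [|m] //; first by rewrite stirling2_0.
by rewrite ltnS => ltnm; rewrite stirling2SS !IHn ?muln0 // ltnW.
Qed.

Local Open Scope ring_scope.

Section LogDerivativePolynomials.
Variable R : comNzRingType.

Fixpoint logder_poly n : {poly R} :=
  if n is n'.+1 then ('X - 'X^2) * (logder_poly n')^`() else 'X.

Definition binomial_sum n := \sum_(i < n) logder_poly i *+ 'C(n, i).

Lemma binomial_sumS n :
  binomial_sum n.+1 = binomial_sum n + logder_poly n + ('X - 'X^2) * (binomial_sum n)^`().
Proof.
have -> : binomial_sum n + logder_poly n = \sum_(i < n.+1) logder_poly i *+ 'C(n, i).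
  by rewrite big_ord_recr /= binn mulr1n.
rewrite /binomial_sum !big_ord_recl !bin0 !mulr1n -!addrA; congr (_ + _).
rewrite raddf_sum mulr_sumr -big_split /=; apply: eq_bigr => i _.
by rewrite binS mulrnDr derivMn mulrnAr.
Qed.

Lemma logder_poly_id n : logder_poly n + 'X * binomial_sum n = 'X.
Proof.
elim: n => [|n IHn]; first by rewrite /binomial_sum big_ord0 mulr0 addr0.
have dIHn : (logder_poly n)^`() = 1 - binomial_sum n - 'X * (binomial_sum n)^`().
  by have := congr1 deriv IHn; rewrite derivD derivM derivX mul1r => <-; ring.
rewrite binomial_sumS /= dIHn.
have -> : logder_poly n = 'X - 'X * binomial_sum n by rewrite -{1}IHn addrK.
ring.
Qed.

Lemma coef0_logder_poly n : (logder_poly n)`_0 = 0.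
Proof. by case: n => [|n]; rewrite /= ?coefX // mulrBl coefB coefXM coefXnM subrr. Qed.

Lemma coef_logder_polyS n j :
  (logder_poly n.+1)`_j.+1 = (logder_poly n)`_j.+1 *+ j.+1 - (logder_poly n)`_j *+ j.
Proof.
rewrite /= mulrBl coefB coefXM coefXnM !coef_deriv.
by case: j => [|j]; rewrite /= ?mulr0n ?subr0 // !subSS subn0.
Qed.

Lemma coef_logder_poly n j :
  (logder_poly n)`_j.+1 = (-1) ^+ j * j`!%:R * (stirling2 n.+1 j.+1)%:R.
Proof.
elim: n j => [|n IHn] j.
  rewrite coefX stirling2SS stirling2_0 muln0 stirling2_0.
  by case: j => [|j]; rewrite ?mulr0 // expr0 !mul1r.
rewrite coef_logder_polyS (stirling2SS n.+1 j) IHn.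
case: j => [|j]; first by rewrite mulr0n subr0 stirling2S0 addn0 mul1n.
rewrite IHn natrD natrM !factS !natrM exprS; ring.
Qed.

Lemma horner_logder_poly n (t : R) :
  (logder_poly n).[t] =
    \sum_(j < n.+1) (-1) ^+ j * j`!%:R * (stirling2 n.+1 j.+1)%:R * t ^+ j.+1.
Proof.
rewrite (@horner_coef_wide _ n.+2); last first.
  by apply/leq_sizeP => -[//|j] ltnj; rewrite coef_logder_poly stirling2_small ?mulr0.
rewrite big_ord_recl coef0_logder_poly mul0r add0r.
by apply: eq_bigr => j _; rewrite coef_logder_poly.
Qed.

End LogDerivativePolynomials.

Lemma binomial_recursion_uniq (R : nzRingType) (c : R) (a b : nat -> R) :
    (forall n, a n + c * \sum_(i < n) a i *+ 'C(n, i) = c) ->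
    (forall n, b n + c * \sum_(i < n) b i *+ 'C(n, i) = c) ->
  a =1 b.
Proof.
move=> recA recB; elim/ltn_ind => n IHn.
rewrite -[a n](addrK (c * \sum_(i < n) a i *+ 'C(n, i))) recA.
rewrite -[b n](addrK (c * \sum_(i < n) b i *+ 'C(n, i))) recB.
by congr (c - c * _); apply: eq_bigr => i _; rewrite IHn.
Qed.

Section QtQuotient.
Variables (R : numFieldType) (t : R).

Lemma natr_fact_neq0 n : n`!%:R != 0 :> R.
Proof. by rewrite pnatr_eq0 -lt0n fact_gt0. Qed.

Lemma Qt0 : Qt t 0 = 1.
Proof.
by rewrite /Qt /fps_add /fps_scale /fps_exp /fps_opp /fps_one /= invr1 subrr mulr0 addr0.
Qed.

Lemma QtS j : Qt t j.+1 = t / j.+1`!%:R.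
Proof.
by rewrite /Qt /fps_add /fps_scale /fps_exp /fps_opp /fps_one /= oppr0 addr0 add0r.
Qed.

Lemma deriv_Qt n : fps_deriv (Qt t) n = t / n`!%:R.
Proof.
rewrite /fps_deriv QtS factS natrM; field.
by rewrite natr_fact_neq0 addrC natr1 pnatr_eq0.
Qed.

Variables (h : fps R) (hq : fps_quotient (fps_deriv (Qt t)) (Qt t) h).

Lemma Qt_quotient_recursion n :
  n`!%:R * h n + t * \sum_(i < n) (i`!%:R * h i) *+ 'C(n, i) = t.
Proof.
have := hq n; rewrite /fps_mul big_ord_recl Qt0 mul1r subn0 deriv_Qt.
rewrite (reindex_inj rev_ord_inj) /= => /(congr1 ( *%R n`!%:R)).
rewrite mulrDr mulrCA divff ?natr_fact_neq0 // mulr1 => E; rewrite -[RHS]E.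
congr (_ + _).
rewrite !mulr_sumr; apply: eq_bigr => i _.
have le_in : (i <= n)%N := ltnW (ltn_ord i).
rewrite /bump add1n QtS subnSK // subKn // -mulr_natr.
rewrite -(bin_fact le_in) !natrM; field.
by rewrite !natr_fact_neq0.
Qed.

Lemma Qt_quotientE n : h n = (logder_poly R n).[t] / n`!%:R.
Proof.
have logder_rec m :
    (logder_poly R m).[t] + t * \sum_(i < m) (logder_poly R i).[t] *+ 'C(m, i) = t.
  rewrite -[X in _ = X](hornerX t) -(logder_poly_id R m) hornerD hornerM hornerX horner_sum.
  by under [in RHS]eq_bigr do rewrite hornerMn.
rewrite -[h n](mulKf (natr_fact_neq0 n)).
by rewrite (binomial_recursion_uniq Qt_quotient_recursion logder_rec n) mulrC.
Qed.

End QtQuotient.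

Theorem lemma4p3 (R : numFieldType) (t : R) (k : nat) (hk : (1 <= k)%N)
    (h : fps R) (hq : fps_quotient (fps_deriv (Qt t)) (Qt t) h) :
  h k.-1 =
    t * \sum_(i < k)
          ((stirling2 k (k - i))%:R / ('C(k.-1, i) * i`!)%:R) * (- t) ^+ (k.-1 - i).
Proof.
case: k hk => [//|n] _ /=.
rewrite (Qt_quotientE hq) horner_logder_poly mulr_suml mulr_sumr (reindex_inj rev_ord_inj).
apply: eq_bigr => i _; have le_in : (i <= n)%N := ltn_ord i.
rewrite /= subSS subSn // bin_ffact -(ffact_fact le_in) [(- t) ^+ _]exprNn exprS natrM.
field.
by rewrite natr_fact_neq0 andbT pnatr_eq0 -lt0n ffact_gt0.
Qed.
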